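(* For every zero-error variable-length $(k,N)$ network code for the network in the context and every $\boldsymbol\sigma\in\{0,1,2,3\}^k$ having exactly $x$ components equal to $1$ and $y$ components equal to $2$, $$H(\mathbf Z_1^N,\mathbf Z_2^N\mid\boldsymbol\Sigma=\boldsymbol\sigma)\ \ge\ H(\mathbf p^\star_{x,y}).$$
   Context: Network: sources $s_1,s_2,s_3$, terminal $t$, edges $(s_3,s_1),(s_3,s_2),(s_1,t),(s_2,t)$; $s_j$ observes $\mathbf X_j\in\{0,1\}^k$, all $3k$ bits i.i.d. uniform; $s_1,s_2$ receive $\mathbf X_3$. $\mathcal Z$ is a finite alphabet, $|\mathcal Z|\ge2$. A variable-length $(k,N)$ network code: encoders $\phi_1,\phi_2:\{0,1\}^k\times\{0,1\}^k\to\mathcal Z^*$ giving sequences $\mathbf Z_1=\phi_1(\mathbf X_1,\mathbf X_3)$, $\mathbf Z_2=\phi_2(\mathbf X_2,\mathbf X_3)$; a positive-integer-valued stopping time $N$ for the sequence of pairs $(\mathbf Z_1(m),\mathbf Z_2(m))_{m\ge1}$; a decoder $\hat{\boldsymbol\Sigma}=\psi(\mathbf Z_1^N,\mathbf Z_2^N)$, $\mathbf Z_j^N$ the first $N$ symbols of $\mathbf Z_j$. $\boldsymbol\Sigma=\mathbf X_1+\mathbf X_2+\mathbf X_3$ (componentwise integer sum); zero-error means $\Pr(\hat{\boldsymbol\Sigma}\ne\boldsymbol\Sigma)=0$. Clumpy distribution: for $m=x+y$, $L=2^m$, $M=3^m$, let $n_1\ge n_2\ge\dots\ge n_L$ be the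 list in which, for each $u=0,1,\dots,m$, the value $2^{m-u}$ appears exactly $\binom mu$ times (so $\sum_in_i=M$); let $\mathbf e_i^\star\in\{0,1\}^L$ have ones in its first $n_i$ positions and zeros elsewhere; $\mathbf p^\star_{x,y}=\frac1M\sum_{i=1}^L\mathbf e_i^\star$. $H$ denotes Shannon entropy in bits. *)

From Stdlib Require Import Reals.
From mathcomp Require Import all_boot.
Set Implicit Arguments. Unset Strict Implicit. Unset Printing Implicit Defensive.

Definition log2 (x : R) : R := Rdiv (ln x) (ln (INR 2)).

Definition entropy_list (p : seq R) : R :=
  Ropp (foldr Rplus R0
         [seq (if Rlt_dec R0 q then Rmult q (log2 q) else R0) | q <- p]).

Definition distr_of {T : Type} {V : eqType} (s : seq T) (W : T -> V) : seq R :=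
  let ws := [seq W w | w <- s] in
  [seq Rdiv (INR (count_mem v ws)) (INR (size ws)) | v <- undup ws].

Definition bits (k : nat) := {ffun 'I_k -> bool}.

(** Sample space: (X1, X2, X3), all 3k bits i.i.d. uniform, i.e. the
    uniform distribution on this finite type. *)
Definition outcome (k : nat) := (bits k * bits k * bits k)%type.
Definition X1 {k} (w : outcome k) : bits k := w.1.1.
Definition X2 {k} (w : outcome k) : bits k := w.1.2.
Definition X3 {k} (w : outcome k) : bits k := w.2.

Definition Sigma {k} (w : outcome k) : {ffun 'I_k -> nat} :=
  [ffun i => (X1 w i : nat) + X2 w i + X3 w i].

Definition cond_entropy_Sigma {k : nat} {V : eqType}
    (W : outcome k -> V) (sigma : {ffun 'I_k -> nat}) : R :=
  entropy_list (distr_of (enum [pred w : outcome k | Sigma w == sigma]) W).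

Record vl_code (k : nat) (Z : finType) := VLCode {
  phi1 : bits k -> bits k -> seq Z;
  phi2 : bits k -> bits k -> seq Z;
  stopN : outcome k -> nat;
  psi : seq Z -> seq Z -> {ffun 'I_k -> nat}
}.

Section CodeDefs.
Variables (k : nat) (Z : finType) (c : vl_code k Z).
Definition Z1 (w : outcome k) : seq Z := phi1 c (X1 w) (X3 w).
Definition Z2 (w : outcome k) : seq Z := phi2 c (X2 w) (X3 w).
Definition pairs (w : outcome k) : seq (Z * Z) := zip (Z1 w) (Z2 w).
Definition Z1N (w : outcome k) : seq Z := take (stopN c w) (Z1 w).
Definition Z2N (w : outcome k) : seq Z := take (stopN c w) (Z2 w).

Definition is_stopping_time : Prop :=
  (forall w, 0 < stopN c w) /\
  (forall w, stopN c w <= size (pairs w)) /\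
  (forall w w' m, stopN c w = m ->
      take m (pairs w) = take m (pairs w') -> stopN c w' = m).

(** Zero error: Pr(Sigma_hat <> Sigma) = 0; since every outcome has positive
    probability, this means correct decoding on every outcome. *)
Definition zero_error : Prop :=
  forall w, psi c (Z1N w) (Z2N w) = Sigma w.
End CodeDefs.

Definition clumpy_n (m : nat) : seq nat :=
  flatten [seq nseq 'C(m, u) (2 ^ (m - u)) | u <- iota 0 m.+1].

(** p* = (1/M) sum_i e*_i, where e*_i has ones in its first n_i positions:
    coordinate j (1 <= j <= L) equals #{i | j <= n_i} / M. *)
Definition clumpy (x y : nat) : seq R :=
  let m := x + y in
  [seq Rdiv (INR (count (fun n => j <= n) (clumpy_n m))) (INR (3 ^ m))
  | j <- iota 1 (2 ^ m)].

From HB Require Import structures.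
From Stdlib Require Import Reals Lra Lia.
From mathcomp Require Import all_boot zify.
Set Implicit Arguments. Unset Strict Implicit. Unset Printing Implicit Defensive.

(** Conditioned on [Sigma = sigma], the outcome is uniform on a slice of 3^m
    points (m = x + y), which the value c of X3 splits into fibers: for each d
    there are 'C(m, d) fibers of size 2^d, so the level counts
    #{c | j <= |fiber c|} are exactly the coordinates of M p*_{x,y}.
    Zero error and the stopping-time property make the outputs (Z1^N, Z2^N)
    injective on each fiber: the runs of two outcomes with the same X3 can be
    cut and pasted.  So an output value takes at most one point of each fiber,
    and for every r the output counts truncated at r add up to at least the
    weight of the r largest fibers, which is the truncated total of M p*_{x,y}.
    The output counts are thus majorized by those of p*_{x,y}, and convexity of
    t log t turns this into H(Z1^N, Z2^N | Sigma = sigma) >= H(p*_{x,y}). *)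

(** * Counting and truncated sums *)

Lemma sum_iota_leq a J : \sum_(j <- iota 1 J) (j <= a) = minn a J.
Proof.
elim: J => [|J IH]; first by rewrite big_nil minn0.
by rewrite -[J.+1]addn1 iotaD big_cat /= IH big_seq1 add1n; case: leqP; lia.
Qed.

Lemma sum_count_undup (T V : eqType) (s : seq T) (W : T -> V) (Q : pred T) :
  \sum_(v <- undup (map W s)) count (fun w => Q w && (W w == v)) s = count Q s.
Proof.
under eq_bigr do rewrite -sum1_count big_mkcond /=.
rewrite exchange_big -sum1_count [RHS]big_mkcond /=; apply: eq_big_seq => w sw.
case: (Q w) => /=; last by rewrite big1.
rewrite -big_mkcond sum1_count (eq_count (a2 := pred1 (W w))) => [|v]; last exact: eq_sym.
by rewrite count_uniq_mem ?undup_uniq // mem_undup map_f.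
Qed.

Lemma sum_count_mem_undup (V : eqType) (s : seq V) :
  \sum_(v <- undup s) count_mem v s = size s.
Proof.
have := sum_count_undup s id predT; rewrite map_id count_predT => <-.
by apply: eq_bigr => v _; apply: eq_count => w.
Qed.

Lemma sum_sub_add_min (T : Type) (l : seq T) (f : T -> nat) r :
  \sum_(v <- l) (f v - r) + \sum_(v <- l) minn (f v) r = \sum_(v <- l) f v.
Proof. by rewrite -big_split; apply: eq_bigr => v _ /=; lia. Qed.

Lemma count_in_le_sum_min (T V : eqType) (C : finType) (s : seq T) (W : T -> V)
    (X : T -> C) (R : {set C}) r :
  uniq s -> {in s &, forall w w', W w = W w' -> X w = X w' -> w = w'} -> #|R| <= r ->
  count (fun w => X w \in R) s
    <= \sum_(v <- undup (map W s)) minn (count_mem v (map W s)) r.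
Proof.
move=> uniq_s injX card_R; rewrite -(sum_count_undup s W); apply: leq_sum => v _.
rewrite leq_min; apply/andP; split.
  by rewrite count_map; apply: sub_count => w /andP [].
rewrite -size_filter; set L := filter _ s.
have uniq_XL : uniq (map X L).
  rewrite map_inj_in_uniq ?filter_uniq // => w w'.
  rewrite !mem_filter => /andP [/andP [_ /eqP Ww] sw] /andP [/andP [_ /eqP Ww'] sw'].
  by apply: injX => //; rewrite Ww Ww'.
rewrite -(size_map X) -(card_uniqP uniq_XL); apply: (leq_trans _ card_R).
apply/subset_leq_card/subsetP => x /mapP [w]; rewrite mem_filter.
by move=> /andP [/andP [XR _] _] ->.
Qed.

Section TopSet.
Variables (C : finType) (n : C -> nat) (r : nat) (R : {set C}).
Hypotheses (card_R : #|R| <= r)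
  (R_max : forall R' : {set C}, #|R'| <= r -> \sum_(c in R') n c <= \sum_(c in R) n c).

Lemma level_min_le_top j : 0 < j ->
  minn #|[set c | j <= n c]| r <= #|[set c in R | j <= n c]|.
Proof.
move=> j_gt0; have [level_sub | /subsetPn [c0]] := boolP ([set c | j <= n c] \subset R).
  rewrite geq_min; apply/orP; left; apply/subset_leq_card/subsetP => c.
  by rewrite !inE => jc; rewrite jc andbT (subsetP level_sub) ?inE.
(* An element c0 of level j outside R could be added to R, or swapped for an
   element of R below level j, contradicting the maximality of R. *)
rewrite inE => jc0 c0R.
have full_R : r <= #|R|.
  rewrite leqNgt; apply/negP => lt_Rr.
  have := @R_max (c0 |: R); rewrite cardsU1 c0R add1n => /(_ lt_Rr).
  by rewrite big_setU1 //=; lia.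
have R_level c : c \in R -> j <= n c.
  move=> cR; rewrite leqNgt; apply/negP => ltcj.
  have c0R' : c0 \notin R :\ c by rewrite !inE negb_and c0R orbT.
  have := @R_max (c0 |: (R :\ c)); rewrite cardsU1 c0R' add1n.
  have := cardsD1 c R; rewrite cR => card_Rc.
  move=> /(_ ltac:(lia)); rewrite big_setU1 //= (big_setD1 _ cR) /=; lia.
rewrite geq_min; apply/orP; right; apply: leq_trans full_R _.
by apply/subset_leq_card/subsetP => c cR; rewrite inE cR R_level.
Qed.

Lemma sum_level_min_le_top J :
  \sum_(j <- iota 1 J) minn #|[set c | j <= n c]| r <= \sum_(c in R) n c.
Proof.
apply: (@leq_trans (\sum_(j <- iota 1 J) #|[set c in R | j <= n c]|)).
  rewrite big_seq [X in _ <= X]big_seq; apply: leq_sum => j.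
  by rewrite mem_iota => /andP [j_gt0 _]; apply: level_min_le_top.
under eq_bigr => j _ do rewrite -sum1_card big_mkcond /=.
rewrite exchange_big /= [X in _ <= X]big_mkcond; apply: leq_sum => c _.
under eq_bigr do rewrite inE.
case: (c \in R) => /=; last by rewrite big1.
rewrite (eq_bigr (fun j => (j <= n c) : nat)) => [|j _]; last by case: (j <= n c).
by rewrite sum_iota_leq geq_minl.
Qed.

End TopSet.

Lemma exists_top_set (C : finType) (n : C -> nat) r J :
  exists2 R : {set C}, #|R| <= r &
    \sum_(j <- iota 1 J) minn #|[set c | j <= n c]| r <= \sum_(c in R) n c.
Proof.
have card_set0 : #|(set0 : {set C})| <= r by rewrite cards0.
have [R card_R R_max] :=
  @arg_maxnP _ set0 (fun R : {set C} => #|R| <= r) (fun R => \sum_(c in R) n c) card_set0.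
by exists R => //; apply: sum_level_min_le_top.
Qed.

(** * Majorization and entropy *)

HB.instance Definition _ := Monoid.isComLaw.Build R R0 Rplus
  (fun x y z => esym (Rplus_assoc x y z)) Rplus_comm Rplus_0_l.
HB.instance Definition _ := Monoid.isMulLaw.Build R R0 Rmult Rmult_0_l Rmult_0_r.
HB.instance Definition _ :=
  Monoid.isAddLaw.Build R Rmult Rplus Rmult_plus_distr_r Rmult_plus_distr_l.

Section Entropy.
Local Open Scope R_scope.

Lemma INR_sum (T : Type) (l : seq T) (f : T -> nat) :
  INR (\sum_(v <- l) f v) = \big[Rplus/0]_(v <- l) INR (f v).
Proof. exact: (big_morph INR plus_INR). Qed.

Lemma Rle_sum (I : Type) (r : seq I) (P : pred I) (F G : I -> R) :
  (forall i, P i -> F i <= G i) ->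
  \big[Rplus/0]_(i <- r | P i) F i <= \big[Rplus/0]_(i <- r | P i) G i.
Proof. by move=> FG; apply: big_ind2 => //; [exact: Rle_refl | exact: Rplus_le_compat]. Qed.

Definition xlnx (n : nat) : R := INR n * ln (INR n).

Lemma entropy_list_counts (T : Type) (l : seq T) (f : T -> nat) (M : nat) :
  (0 < M)%N ->
  entropy_list [seq INR (f v) / INR M | v <- l] =
  (INR (\sum_(v <- l) f v) * ln (INR M) - \big[Rplus/0]_(v <- l) xlnx (f v))
    / (INR M * ln 2).
Proof.
move=> /ltP /lt_0_INR M_gt0.
have ln2_gt0 : 0 < ln 2 by rewrite -ln_1; apply: ln_increasing; lra.
have term v : (if Rlt_dec 0 (INR (f v) / INR M)
               then INR (f v) / INR M * log2 (INR (f v) / INR M) else 0)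
              = (xlnx (f v) - INR (f v) * ln (INR M)) / (INR M * ln 2).
  rewrite /xlnx /log2 (_ : INR 2 = 2); last by rewrite /=; lra.
  case: Rlt_dec => [fv_gt0 | fv_le0] /=.
    have fv_gt0' : 0 < INR (f v).
      have := Rmult_lt_0_compat _ _ fv_gt0 M_gt0.
      by rewrite /Rdiv Rmult_assoc Rinv_l ?Rmult_1_r //; lra.
    rewrite /Rdiv ln_mult ?ln_Rinv //; last exact: Rinv_0_lt_compat.
    by field; lra.
  have -> : f v = 0%N.
    case: (f v) fv_le0 => // n fv_le0; exfalso; apply: fv_le0.
    by apply: Rdiv_lt_0_compat => //; apply: lt_0_INR; lia.
  by rewrite /=; field; lra.
rewrite /entropy_list -map_comp.
elim: l => [|a l IH]; rewrite ?big_nil ?big_cons /=; first by field; lra.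
rewrite /comp term in IH *; rewrite Ropp_plus_distr IH plus_INR.
by field; lra.
Qed.

Section DiscreteConvexity.
Variable phi : nat -> R.

Definition slope (t : nat) : R := if t is t'.+1 then phi t'.+1 - phi t' else 0.
Definition curvature (r : nat) : R := slope r.+1 - slope r.

Lemma sum_curvature t : \big[Rplus/0]_(0 <= r < t) curvature r = slope t.
Proof.
elim: t => [|t IH]; first by rewrite big_geq.
by rewrite big_nat_recr // IH /curvature /=; ring.
Qed.

Lemma layer_cake B t : phi 0 = 0 -> (t <= B)%N ->
  phi t = \big[Rplus/0]_(0 <= r < B) (curvature r * INR (t - r)%N).
Proof.
move=> phi0; elim: t => [|t IH] ltB.
  by rewrite big1 // => r _; rewrite sub0n /=; ring.
have step r : curvature r * INR (t.+1 - r)%N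
              = curvature r * INR (t - r)%N + (if (r < t.+1)%N then curvature r else 0).
  case: ltnP => [le_rt | lt_tr].
    by rewrite subSn // S_INR /=; ring.
  rewrite (eqP (_ : t.+1 - r == 0)%N) ?subn_eq0 //.
  by rewrite (eqP (_ : t - r == 0)%N) ?subn_eq0 ?(ltnW lt_tr) //=; ring.
rewrite (eq_bigr _ (fun r _ => step r)) big_split /= -IH ?(ltnW ltB) //.
rewrite (big_cat_nat _ (n := t.+1)) //= [X in _ + (_ + X)]big1_seq ?Rplus_0_r; last first.
  by move=> r /andP [_]; rewrite mem_index_iota => /andP [/leq_gtF ->].
rewrite (eq_big_nat _ _ (F2 := curvature)); last by move=> r /andP [_ ->].
by rewrite sum_curvature /=; ring.
Qed.

Lemma sum_layer_cake (K : eqType) (l : seq K) (h : K -> nat) B :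
  phi 0 = 0 -> {in l, forall x, h x <= B}%N ->
  \big[Rplus/0]_(x <- l) phi (h x)
    = \big[Rplus/0]_(0 <= r < B) (curvature r * INR (\sum_(x <- l) (h x - r))).
Proof.
move=> phi0 h_le; rewrite big_seq (eq_bigr _ (fun x lx => layer_cake phi0 (h_le x lx))).
rewrite exchange_big /=; apply: eq_bigr => r _.
by rewrite -big_seq -big_distrr /= -INR_sum.
Qed.

(* phi is a nonnegative combination of the truncated ramps t |-> t - r, and
   the sums of the ramps are the tails compared in the hypothesis. *)
Lemma sum_convex_le_of_tails (I J : eqType) (l1 : seq I) (l2 : seq J) f g :
  phi 0 = 0 -> (forall r, 0 <= curvature r) ->
  (forall r, \sum_(i <- l1) (f i - r) <= \sum_(j <- l2) (g j - r))%N ->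
  \big[Rplus/0]_(i <- l1) phi (f i) <= \big[Rplus/0]_(j <- l2) phi (g j).
Proof.
move=> phi0 curv_ge0 tails.
set B := (\max_(i <- l1) f i + \max_(j <- l2) g j)%N.
rewrite (@sum_layer_cake _ l1 f B) ?(@sum_layer_cake _ l2 g B) // => [|j l2j | i l1i].
- apply: Rle_sum => r _; apply: Rmult_le_compat_l => //.
  exact/le_INR/leP.
- by apply: leq_trans (leq_addl _ _); exact: leq_bigmax_seq.
- by apply: leq_trans (leq_addr _ _); exact: leq_bigmax_seq.
Qed.

End DiscreteConvexity.

Lemma mul_ln_sub_le x y : 0 < x -> 0 < y -> x * (ln y - ln x) <= y - x.
Proof.
move=> x_gt0 y_gt0.
have := exp_ineq1_le (ln y - ln x); rewrite /Rminus exp_plus exp_Ropp !exp_ln //.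
move=> /(Rmult_le_compat_l x _ _ (Rlt_le _ _ x_gt0)).
by rewrite (_ : x * (y * / x) = y); [lra | field; lra].
Qed.

Lemma curvature_xlnx_ge0 r : 0 <= curvature xlnx r.
Proof.
case: r => [|a]; first by rewrite /curvature /slope /xlnx /= ln_1; lra.
rewrite /curvature /slope /xlnx !S_INR.
have u_ge0 := pos_INR a; set u := INR a in u_ge0 *.
have lower := mul_ln_sub_le (x := u + 1 + 1) (y := u + 1) ltac:(lra) ltac:(lra).
have upper : u * (ln (u + 1) - ln u) <= 1.
  have [-> | u_gt0] : u = 0 \/ 0 < u by lra.
    by lra.
  by have := mul_ln_sub_le u_gt0 (_ : 0 < u + 1); lra.
nra.
Qed.

Lemma entropy_counts_le_of_sum_min (I J : eqType) (l1 : seq I) (l2 : seq J) f g M :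
  (0 < M)%N -> \sum_(i <- l1) f i = M -> \sum_(j <- l2) g j = M ->
  (forall r, \sum_(j <- l2) minn (g j) r <= \sum_(i <- l1) minn (f i) r)%N ->
  entropy_list [seq INR (g j) / INR M | j <- l2]
    <= entropy_list [seq INR (f i) / INR M | i <- l1].
Proof.
move=> M_gt0 sum_f sum_g min_le.
have tails r : (\sum_(i <- l1) (f i - r) <= \sum_(j <- l2) (g j - r))%N.
  have := sum_sub_add_min l1 f r; have := sum_sub_add_min l2 g r; have := min_le r.
  by rewrite sum_f sum_g; lia.
have := sum_convex_le_of_tails (phi := xlnx) _ curvature_xlnx_ge0 tails.
rewrite !entropy_list_counts // sum_f sum_g /xlnx /= Rmult_0_l => /(_ erefl) xlnx_le.
apply: Rmult_le_compat_r; last lra.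
apply/Rlt_le/Rinv_0_lt_compat/Rmult_lt_0_compat; first by apply/lt_0_INR/ltP.
by rewrite -ln_1; apply: ln_increasing; lra.
Qed.

End Entropy.

(** * Zero-error codes separate the outcomes with equal X3 *)

Lemma take_zip (S T : Type) n (s : seq S) (t : seq T) :
  take n (zip s t) = zip (take n s) (take n t).
Proof. by elim: n s t => [|n IH] [|a s] [|b t] //=; rewrite IH. Qed.

Lemma outcome_eq_of_Sigma k (w w' : outcome k) :
  Sigma w = Sigma w' -> X3 w = X3 w' -> X1 w = X1 w' \/ X2 w = X2 w' -> w = w'.
Proof.
case: w w' => [[a1 a2] a3] [[b1 b2] b3]; rewrite /X1 /X2 /X3 /=.
move=> /ffunP S_eq X3_eq X12_eq; have {X12_eq} [] := X12_eq => ?; subst;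
  congr (_, _, _); apply/ffunP => i; move: (S_eq i); rewrite !ffunE /X1 /X2 /X3 /=;
  by case: (_ i); case: (_ i); lia.
Qed.

Section Code.
Variables (k : nat) (Z : finType) (c : vl_code k Z).
Hypotheses (stop_c : is_stopping_time c) (zero_err : zero_error c).

Lemma size_Z1N w : size (Z1N c w) = stopN c w.
Proof.
case: stop_c => _ [/(_ w) N_le _]; apply: size_takel; apply: leq_trans N_le _.
by rewrite size_zip geq_minl.
Qed.

Lemma code_output_injective w w' : Sigma w = Sigma w' ->
  (Z1N c w, Z2N c w) = (Z1N c w', Z2N c w') -> X3 w = X3 w' -> w = w'.
Proof.
move=> S_eq [Z1_eq Z2_eq] X3_eq.
have N_eq : stopN c w' = stopN c w by rewrite -!size_Z1N Z1_eq.
have Z2w' : take (stopN c w) (Z2 c w') = Z2N c w.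
  by rewrite -[in LHS]N_eq -/(Z2N c w') -Z2_eq.
(* The hybrid v runs like w until time N(w), so it stops then and decodes to
   Sigma w; this forces X2 w' = X2 w. *)
pose v : outcome k := (X1 w, X2 w', X3 w).
have Z2v : Z2 c v = Z2 c w' by rewrite /Z2 /v /X3 /= -/(X3 w) X3_eq.
have Nv : stopN c v = stopN c w.
  case: stop_c => _ [_ /(_ w v _ erefl)]; apply.
  by rewrite /pairs !take_zip Z2v Z2w'.
have v_w : v = w.
  apply: outcome_eq_of_Sigma => //; last by left.
  by rewrite -!zero_err /Z1N /Z2N Nv Z2v Z2w'.
by apply: outcome_eq_of_Sigma => //; right; rewrite -v_w.
Qed.

End Code.

(** * The fibers of the slice and the clumpy distribution *)

Lemma count_clumpy_n m j :
  count (leq j) (clumpy_n m) = \sum_(d < m.+1) 'C(m, d) * (j <= 2 ^ d).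
Proof.
rewrite /clumpy_n count_flatten -map_comp sumnE big_map.
rewrite (_ : iota 0 m.+1 = index_iota 0 m.+1) ?big_mkord; last by rewrite /index_iota subn0.
rewrite (reindex_inj rev_ord_inj) /=; apply: eq_bigr => d _.
have d_le : d <= m by rewrite -ltnS.
by rewrite count_nseq /= subSS subKn // bin_sub // mulnC.
Qed.

Lemma sum_count_clumpy_n m :
  \sum_(j <- iota 1 (2 ^ m)) count (leq j) (clumpy_n m) = 3 ^ m.
Proof.
under eq_bigr do rewrite count_clumpy_n.
rewrite exchange_big -[3]/(1 + 2) expnDn /=; apply: eq_bigr => d _.
rewrite exp1n mul1n -big_distrr sum_iota_leq /=; congr (_ * _).
by apply/minn_idPl; rewrite leq_exp2l // -ltnS ltn_ord.
Qed.

Section Fibers.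
Variables (k : nat) (sigma : {ffun 'I_k -> nat}).
Hypothesis sigma_le3 : forall i, sigma i <= 3.

Definition slice := [pred w : outcome k | Sigma w == sigma].
Definition fiber (c : bits k) := [set w | slice w && (X3 w == c)].

Definition admissible (c : bits k) :=
  [forall i, (c i <= sigma i) && (sigma i - c i <= 2)].
Definition free_coords (c : bits k) := [set i | sigma i - c i == 1].
Definition mixed_coords := [set i | (sigma i == 1) || (sigma i == 2)].

Definition fiber_point (c : bits k) (A : {set 'I_k}) : outcome k :=
  ([ffun i => if i \in free_coords c then i \in A else sigma i - c i == 2],
   [ffun i => if i \in free_coords c then i \notin A else sigma i - c i == 2], c).
Definition fiber_label (c : bits k) (w : outcome k) := [set i in free_coords c | X1 w i].

Lemma fiber_labelK c w : w \in fiber c -> fiber_point c (fiber_label c w) = w.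
Proof.
rewrite !inE => /andP [/eqP Sw /eqP X3w].
have sum_w i : (X1 w i : nat) + X2 w i + c i = sigma i by rewrite -Sw ffunE X3w.
rewrite [RHS]surjective_pairing [w.1]surjective_pairing /fiber_point -/(X3 w) X3w.
congr (_, _, _); apply/ffunP => i; rewrite ffunE !inE; have := sum_w i;
  by rewrite /X1 /X2; case: (w.1.1 i); case: (w.1.2 i); case: (c i) => /= <-.
Qed.

Lemma fiber_pointK c (A : {set 'I_k}) : admissible c -> A \subset free_coords c ->
  fiber_point c A \in fiber c /\ fiber_label c (fiber_point c A) = A.
Proof.
move=> /forallP adm_c A_free; split.
  rewrite !inE eqxx andbT; apply/eqP/ffunP => i; rewrite !ffunE /= !inE.
  have := adm_c i; have := sigma_le3 i.
  by case: (sigma i) => [|[|[|[|s]]]]; case: (c i); case: (i \in A).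
apply/setP => i; rewrite inE /X1 /= ffunE; case: ifP => //= i_free.
by apply/esym/negbTE/negP => /(subsetP A_free); rewrite i_free.
Qed.

Lemma admissible_of_fiber c w : w \in fiber c -> admissible c.
Proof.
rewrite !inE => /andP [/eqP Sw /eqP X3w]; apply/forallP => i.
by move/ffunP: Sw => /(_ i); rewrite ffunE X3w => <-; lia.
Qed.

Lemma card_fiber c : #|fiber c| = if admissible c then 2 ^ #|free_coords c| else 0.
Proof.
case: (boolP (admissible c)) => [adm_c | not_adm]; last first.
  by apply: eq_card0 => w; apply/negP => /admissible_of_fiber; apply/negP.
have -> : fiber c = fiber_point c @: powerset (free_coords c).
  apply/setP => w; apply/idP/imsetP => [w_fib | [A]].
    exists (fiber_label c w); last by rewrite fiber_labelK.
    by rewrite powersetE; apply/subsetP => i; rewrite inE => /andP [].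
  by rewrite powersetE => A_free ->; case: (fiber_pointK adm_c A_free).
rewrite card_in_imset ?card_powerset // => A B; rewrite !powersetE => A_free B_free E.
case: (fiber_pointK adm_c A_free) => _ <-.
by case: (fiber_pointK adm_c B_free) => _ <-; rewrite E.
Qed.

Definition x3_of_free (B : {set 'I_k}) : bits k :=
  [ffun i => (sigma i == 3) || ((sigma i == 1) && (i \notin B))
              || ((sigma i == 2) && (i \in B))].

Lemma free_coords_sub c : admissible c -> free_coords c \subset mixed_coords.
Proof.
move=> /forallP adm_c; apply/subsetP => i; rewrite !inE; have := adm_c i.
by have := sigma_le3 i; case: (sigma i) => [|[|[|[|s]]]]; case: (c i).
Qed.

Lemma free_coordsK c : admissible c -> x3_of_free (free_coords c) = c.
Proof.
move=> /forallP adm_c; apply/ffunP => i; rewrite ffunE !inE; have := adm_c i.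
by have := sigma_le3 i; case: (sigma i) => [|[|[|[|s]]]]; case: (c i).
Qed.

Lemma x3_of_freeK (B : {set 'I_k}) : B \subset mixed_coords ->
  admissible (x3_of_free B) /\ free_coords (x3_of_free B) = B.
Proof.
move=> B_mixed; split.
  apply/forallP => i; rewrite ffunE; have := sigma_le3 i.
  by case: (sigma i) => [|[|[|[|s]]]]; case: (i \in B).
apply/setP => i; rewrite !inE ffunE; have := sigma_le3 i; have := subsetP B_mixed i.
by rewrite inE; case: (sigma i) => [|[|[|[|s]]]]; case: (i \in B) => //= /(_ isT).
Qed.

Lemma free_coords_image :
  free_coords @: [set c | admissible c] = [set B : {set 'I_k} | B \subset mixed_coords].
Proof.
apply/setP => B; rewrite inE; apply/imsetP/idP => [[c] | B_mixed].
  by rewrite inE => adm_c ->; apply: free_coords_sub.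
by case: (x3_of_freeK B_mixed) => adm free; exists (x3_of_free B); rewrite ?inE.
Qed.

Lemma sum_card_fiber (F : nat -> nat) : F 0 = 0 ->
  \sum_(c : bits k) F #|fiber c|
    = \sum_(d < #|mixed_coords|.+1) 'C(#|mixed_coords|, d) * F (2 ^ d).
Proof.
move=> F0; rewrite (bigID admissible) /= [X in _ + X]big1 ?addn0; last first.
  by move=> c /negbTE not_adm; rewrite card_fiber not_adm.
under eq_bigr => c adm_c do rewrite card_fiber adm_c.
have -> : \sum_(c | admissible c) F (2 ^ #|free_coords c|)
          = \sum_(B in [set B : {set 'I_k} | B \subset mixed_coords]) F (2 ^ #|B|).
  rewrite -free_coords_image big_imset /=; first by apply: eq_bigl => c; rewrite inE.
  by move=> c1 c2; rewrite !inE => adm1 adm2 E; rewrite -(free_coordsK adm1) E free_coordsK.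
rewrite (partition_big (fun B : {set 'I_k} => inord #|B| : 'I_#|mixed_coords|.+1) predT) //=.
apply: eq_bigr => d _; rewrite -(cards_draws mixed_coords d) -sum_nat_cond_const.
apply: eq_big => [B | B]; last first.
  by rewrite inE => /andP [B_mixed /eqP <-]; rewrite inordK // ltnS subset_leq_card.
rewrite !inE; case B_mixed: (B \subset mixed_coords) => //=.
have B_small : #|B| < #|mixed_coords|.+1 by rewrite ltnS subset_leq_card.
by apply/eqP/eqP => [<- | E]; [rewrite inordK | apply: val_inj; rewrite /= inordK].
Qed.

Lemma count_X3_in_slice (R : {set bits k}) :
  count (fun w => X3 w \in R) (enum slice) = \sum_(c in R) #|fiber c|.
Proof.
rewrite -sum1_count big_enum_cond (partition_big (@X3 k) (mem R)) => [|w /andP []] //=.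
apply: eq_bigr => c cR; rewrite -sum1_card; apply: eq_bigl => w.
by rewrite !inE; case: (X3 w =P c) => [->|]; rewrite ?cR ?andbT ?andbF.
Qed.

Lemma size_slice : size (enum slice) = 3 ^ #|mixed_coords|.
Proof.
have := count_X3_in_slice setT; rewrite (eq_count (a2 := predT)) => [|w]; last by rewrite inE.
rewrite count_predT => ->; rewrite (eq_bigl predT) => [|c]; last by rewrite inE.
rewrite (sum_card_fiber (F := id)) // -[3]/(1 + 2) expnDn.
by apply: eq_bigr => d _; rewrite exp1n mul1n.
Qed.

Lemma card_level_fiber j : 0 < j ->
  #|[set c | j <= #|fiber c|]| = count (leq j) (clumpy_n #|mixed_coords|).
Proof.
move=> j_gt0; rewrite count_clumpy_n -(sum_card_fiber (F := leq j)); last by case: j j_gt0.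
by rewrite -sum1_card big_mkcond; apply: eq_bigr => c _; rewrite inE; case: leqP.
Qed.

Lemma card_mixed_coords :
  #|mixed_coords| = #|[set i | sigma i == 1]| + #|[set i | sigma i == 2]|.
Proof.
rewrite -cardsUI (_ : _ :&: _ = set0) ?cards0 ?addn0; last first.
  by apply/setP => i; rewrite !inE; case: eqP => // ->.
by apply: eq_card => i; rewrite !inE.
Qed.

End Fibers.

Section SliceOutputs.
Variables (k : nat) (Z : finType) (c : vl_code k Z) (sigma : {ffun 'I_k -> nat}).
Hypotheses (stop_c : is_stopping_time c) (zero_err : zero_error c)
  (sigma_le3 : forall i, sigma i <= 3).

Let outputs := [seq (Z1N c w, Z2N c w) | w <- enum (slice sigma)].
Let m := #|mixed_coords sigma|.

Lemma sum_min_clumpy_le_outputs r :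
  \sum_(j <- iota 1 (2 ^ m)) minn (count (leq j) (clumpy_n m)) r
    <= \sum_(v <- undup outputs) minn (count_mem v outputs) r.
Proof.
have [R card_R top_R] := exists_top_set (fun x => #|fiber sigma x|) r (2 ^ m).
rewrite (eq_big_seq (fun j => minn #|[set x | j <= #|fiber sigma x|]| r)) => [|j];
  last by rewrite mem_iota => /andP [j_gt0 _]; rewrite card_level_fiber.
apply: leq_trans top_R _; rewrite -count_X3_in_slice.
apply: count_in_le_sum_min card_R; first exact: enum_uniq.
move=> w w'; rewrite !mem_enum !inE => /eqP Sw /eqP Sw' out_eq.
by apply: (code_output_injective stop_c zero_err) => //; rewrite Sw Sw'.
Qed.

End SliceOutputs.

Theorem mainTheorem10 (k : nat) (Z : finType) (c : vl_code k Z)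
    (x y : nat) (sigma : {ffun 'I_k -> nat}) :
  1 < #|Z| ->
  is_stopping_time c ->
  zero_error c ->
  (forall i, sigma i <= 3) ->
  #|[set i | sigma i == 1]| = x ->
  #|[set i | sigma i == 2]| = y ->
  Rge (cond_entropy_Sigma (fun w => (Z1N c w, Z2N c w)) sigma)
      (entropy_list (clumpy x y)).
Proof.
move=> _ stop_c zero_err sigma_le3 card1 card2.
have m_eq : #|mixed_coords sigma| = x + y by rewrite card_mixed_coords card1 card2.
rewrite /cond_entropy_Sigma /distr_of /clumpy /= -m_eq size_map -/(slice sigma) size_slice //.
apply/Rle_ge/entropy_counts_le_of_sum_min.
- by rewrite expn_gt0.
- by rewrite sum_count_mem_undup size_map size_slice.
- exact: sum_count_clumpy_n.
- by move=> r; apply: sum_min_clumpy_le_outputs.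
Qed.
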